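(* Let $N\ge4$ be even. Take $X_j=\sigma_z$, $X_j'=\sigma_x$ for $j=1,\dots,N-1$, and $X_N=(\sigma_z+\sigma_x)/\sqrt2$, $X_N'=(\sigma_z-\sigma_x)/\sqrt2$, and let $I^N_{CHSH}=\sum_{a,b\in\{0,1\}}(-1)^{ab}\mathbb A_a\otimes\mathbb B_b$. Then $\langle G|I^N_{CHSH}|G\rangle=2\sqrt2$, $2\sqrt2$ is the largest eigenvalue of $I^N_{CHSH}$, and its eigenspace has dimension $2^{N-2}$; it is spanned by the orthonormal states $\bigotimes_{k\in K}\sigma_x^{(k)}|G\rangle$ where $K$ ranges over subsets of $\{1,\dots,N-1\}$ of even cardinality.
   Context: $|G\rangle=\frac{1}{\sqrt2}(|0\cdots0\rangle+|1\cdots1\rangle)$ is the $N$-qubit GHZ state; $\sigma_x,\sigma_y,\sigma_z$ are Pauli matrices and $\sigma_x^{(k)}$ denotes $\sigma_x$ acting on the $k$-th qubit (identity elsewhere). $\mathbb A_0=\bigotimes_{j=1}^{N-1}X_j$, $\mathbb A_1=\bigotimes_{j=1}^{N-1}X_j'$ act on qubits $1,\dots,N-1$, and $\mathbb B_0=X_N$, $\mathbb B_1=X_N'$ act on qubit $N$. *)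

From HB Require Import structures.
From mathcomp Require Import all_boot all_order all_algebra all_field.
Set Implicit Arguments. Unset Strict Implicit. Unset Printing Implicit Defensive.
Import Order.TTheory GRing.Theory Num.Theory.
Local Open Scope ring_scope.

(* Pauli matrices, indexed by 'I_2 (0 = |0>, 1 = |1>). *)
Definition sigma_x : 'M[algC]_2 := \matrix_(i, j) (if i == j then 0 else 1).
Definition sigma_z : 'M[algC]_2 :=
  \matrix_(i, j) (if i == j then (if val i == 0%N then 1 else -1) else 0).

(* Qubits are numbered 0 .. N-1 (paper's qubit k is our qubit k-1).
   Computational basis index i : 'I_(2^N); qubit k is the k-th binary digit of i. *)
Definition qbit (N : nat) (i : 'I_(2 ^ N)) (k : 'I_N) : 'I_2 :=
  inord (odd (i %/ 2 ^ k)).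

Definition tens (N : nat) (op : 'I_N -> 'M[algC]_2) : 'M[algC]_(2 ^ N) :=
  \matrix_(i, j) \prod_(k < N) op k (qbit i k) (qbit j k).

Definition ghz (N : nat) : 'cV[algC]_(2 ^ N) :=
  \col_i (if (val i == 0%N) || (val i == (2 ^ N).-1) then (sqrtC 2)^-1 else 0).

Definition X_j : 'M[algC]_2 := sigma_z.
Definition X_j' : 'M[algC]_2 := sigma_x.
Definition X_N : 'M[algC]_2 := (sqrtC 2)^-1 *: (sigma_z + sigma_x).
Definition X_N' : 'M[algC]_2 := (sqrtC 2)^-1 *: (sigma_z - sigma_x).

(* A_a (x) B_b : A_a = (x)_{j<N} X_j^{(a)} on qubits 1..N-1, B_b = X_N^{(b)} on qubit N. *)
Definition AB (N : nat) (a b : bool) : 'M[algC]_(2 ^ N) :=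
  tens (fun k : 'I_N => if (k < N.-1)%N then (if a then X_j' else X_j)
                        else (if b then X_N' else X_N)).

Definition I_CHSH (N : nat) : 'M[algC]_(2 ^ N) :=
  \sum_(a : bool) \sum_(b : bool) (-1) ^+ (a && b) *: AB N a b.

Definition adj m n (M : 'M[algC]_(m, n)) : 'M[algC]_(n, m) := (map_mx Num.conj M)^T.

Definition psiK (N : nat) (K : {set 'I_N}) : 'cV[algC]_(2 ^ N) :=
  tens (fun k : 'I_N => if k \in K then sigma_x else 1%:M) *m ghz N.

Definition evenK (N : nat) (K : {set 'I_N}) : bool :=
  (K \subset [set k : 'I_N | (k < N.-1)%N]) && ~~ odd #|K|.

From mathcomp Require Import all_boot all_order all_algebra all_field.
From mathcomp Require Import zify ring.
Set Implicit Arguments. Unset Strict Implicit. Unset Printing Implicit Defensive.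
Import Order.TTheory GRing.Theory Num.Theory.
Local Open Scope ring_scope.

(* On the last qubit X_N + X_N' = sqrt 2 sigma_z and X_N - X_N' = sqrt 2 sigma_x, so the CHSH
   operator is sqrt 2 (Z + X) with Z = sigma_z^{(x)N} and X = sigma_x^{(x)N}. For N even these
   are commuting involutions: the spectrum of Z + X lies in {0, 2, -2}, and its 2-eigenspace is
   the joint +1 eigenspace of Z and X. A sigma_x on one qubit anticommutes with Z and commutes
   with X, a sigma_z on one qubit anticommutes with X, so these unitaries embed the joint
   eigenspace into the three others, and it has dimension at most 2^N / 4. The 2^(N-2) states
   sigma_x^K |G>, for K of even size avoiding the last qubit, are orthonormal eigenvectors,
   hence a basis. *)

(* Toggling a fixed element t0 of A is a parity-reversing involution on the subsets of A. *)
Lemma card_even_subsets (T : finType) (A : {set T}) : A != set0 ->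
  #|[set K : {set T} | (K \subset A) && ~~ odd #|K|]| = (2 ^ #|A|.-1)%N.
Proof.
case/set0Pn => t0 A_t0.
pose toggle (K : {set T}) := if t0 \in K then K :\ t0 else t0 |: K.
have toggleK : involutive toggle.
  move=> K; rewrite /toggle; case: (boolP (t0 \in K)) => K_t0.
    by rewrite !inE eqxx /= setD1K.
  by rewrite !inE eqxx /= setU1K.
have toggle_sub (K : {set T}) : K \subset A -> toggle K \subset A.
  rewrite /toggle; case: ifP => _ sub_KA; first exact: subset_trans (subD1set _ _) sub_KA.
  by rewrite subUset sub1set A_t0.
have odd_toggle (K : {set T}) : odd #|toggle K| = ~~ odd #|K|.
  rewrite /toggle; case: ifP => K_t0; last by rewrite cardsU1 K_t0.
  by rewrite [in RHS](cardsD1 t0) K_t0 /= negbK.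
pose S b := [set K : {set T} | (K \subset A) && (odd #|K| == b)].
have -> : [set K : {set T} | (K \subset A) && ~~ odd #|K|] = S false.
  by apply/setP => K; rewrite !inE eqbF_neg.
have card_S b : (#|S b| <= #|S (~~ b)|)%N.
  rewrite -(card_imset _ (can_inj toggleK)); apply: subset_leq_card.
  apply/subsetP => _ /imsetP [K + ->]; rewrite !inE => /andP [sub_KA /eqP odd_K].
  by rewrite toggle_sub // odd_toggle odd_K eqxx.
have card_S_sum : (#|S false| + #|S true| = 2 ^ #|A|)%N.
  rewrite -card_powerset -(cardsID [set K : {set T} | odd #|K|] (powerset A)) addnC.
  by congr (_ + _); apply: eq_card => L; rewrite !inE ?eqb_id // eqbF_neg andbC.
have := card_S false; have := card_S true; have : (0 < #|A|)%N by apply/card_gt0P; exists t0.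
case: #|A| card_S_sum => // a; rewrite expnS /=; lia.
Qed.

Lemma binary_digits_inj N i j : (i < 2 ^ N)%N -> (j < 2 ^ N)%N ->
  (forall k, (k < N)%N -> odd (i %/ 2 ^ k) = odd (j %/ 2 ^ k)) -> i = j.
Proof.
elim: N i j => [|N IH] i j; first by rewrite expn0 !ltnS !leqn0 => /eqP-> /eqP->.
move=> lt_i lt_j eq_digits.
have := eq_digits 0%N isT; rewrite !expn0 !divn1 => eq_odd.
suff eq_half : i./2 = j./2.
  by rewrite -(odd_double_half i) -(odd_double_half j) eq_odd eq_half.
apply: IH; rewrite -?divn2 ?ltn_divLR // -?expnSr // => k lt_k.
by have := eq_digits k.+1 lt_k; rewrite expnS !divnMA.
Qed.

Lemma prod_bool_natr (R : comPzSemiRingType) (T : finType) (P : pred T) :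
  \prod_(k : T) ((P k)%:R : R) = [forall k, P k]%:R.
Proof.
have [/forallP P_all | /forallPn [k not_Pk]] := boolP [forall k, P k].
  by rewrite big1 // => k _; rewrite P_all.
by rewrite (bigD1 k) //= (negbTE not_Pk) mul0r.
Qed.

(** * Eigenspaces of commuting involutions *)

Section Eigenspaces.
Variables (F : fieldType) (n : nat).
Implicit Types (A Y Q : 'M[F]_n).

Lemma eigenspace_cap0 Y (a b : F) : a != b ->
  (eigenspace Y a :&: eigenspace Y b)%MS = 0.
Proof.
move=> neq_ab; apply/eqP; rewrite -submx0.
set W := (_ :&: _)%MS.
have /eigenspaceP Wa : (W <= eigenspace Y a)%MS by apply: capmxSl.
have /eigenspaceP Wb : (W <= eigenspace Y b)%MS by apply: capmxSr.
have : (a - b) *: W = 0 by rewrite scalerBl -Wa -Wb subrr.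
by move/eqP; rewrite scaler_eq0 subr_eq0 (negbTE neq_ab) => /eqP->.
Qed.

Lemma sub_eigenspaceZ A (s a : F) m (W : 'M_(m, n)) : s != 0 ->
  (W <= eigenspace (s *: A) (s * a))%MS = (W <= eigenspace A a)%MS.
Proof.
move=> s_neq0; apply/eigenspaceP/eigenspaceP => [|WA].
  by rewrite -scalemxAr -scalerA => /(scalerI s_neq0).
by rewrite -scalemxAr WA scalerA.
Qed.

Lemma eigenspaceZ A (s a : F) : s != 0 ->
  (eigenspace (s *: A) (s * a) :=: eigenspace A a)%MS.
Proof.
move=> s_neq0; apply/eqmxP/andP.
by rewrite sub_eigenspaceZ // submx_refl -(sub_eigenspaceZ _ _ _ s_neq0).
Qed.

Lemma eigenvalueZ A (s a : F) : s != 0 -> eigenvalue (s *: A) (s * a) = eigenvalue A a.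
Proof. by move=> s_neq0; rewrite /eigenvalue (eqmx_eq0 (eigenspaceZ A a s_neq0)). Qed.

Lemma sub_eigenspace_mulmx Y Q (a c : F) m (W : 'M_(m, n)) :
  Q *m Y = c *: (Y *m Q) -> (W <= eigenspace Y a)%MS ->
  (W *m Q <= eigenspace Y (a * c))%MS.
Proof.
move=> QY /eigenspaceP WY; apply/eigenspaceP.
by rewrite -mulmxA QY -scalemxAr mulmxA WY -scalemxAl scalerA mulrC.
Qed.

Lemma mxrank_disjoint_image m1 m2 (U : 'M[F]_(m1, n)) (V : 'M_(m2, n)) Q :
  Q \in unitmx -> (U :&: V)%MS = 0 -> (U *m Q <= V)%MS ->
  (2 * \rank U <= \rank (U + V))%N.
Proof.
move=> Q_unit UV0 UQ_V; rewrite mxrank_disjoint_sum // mul2n -addnn leq_add2l.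
by rewrite -(mxrankMfree U (B := Q)) ?row_free_unit ?mxrankS.
Qed.

Section JointEigenspace.
Variables Z X U V : 'M[F]_n.
Hypotheses (two_neq0 : (2 : F) != 0)
  (U_unit : U \in unitmx) (V_unit : V \in unitmx)
  (UZ : U *m Z = -1 *: (Z *m U)) (UX : U *m X = 1 *: (X *m U))
  (VX : V *m X = -1 *: (X *m V)).

(* U embeds the (1, 1) joint eigenspace of (Z, X) into the (-1, 1) one, and V embeds the
   1-eigenspace of X into its -1-eigenspace; eigenspaces for distinct eigenvalues are
   independent. *)
Lemma mxrank_joint_eigenspace : (4 * \rank (eigenspace Z 1 :&: eigenspace X 1) <= n)%N.
Proof.
have cap0 Y : (eigenspace Y 1 :&: eigenspace Y (-1))%MS = 0.
  by apply: eigenspace_cap0; rewrite -subr_eq0 opprK.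
set E11 := (eigenspace Z 1 :&: eigenspace X 1)%MS.
set E21 := (eigenspace Z (-1) :&: eigenspace X 1)%MS.
have rank_E11 : (2 * \rank E11 <= \rank (E11 + E21))%N.
  apply: (mxrank_disjoint_image U_unit).
    by apply/eqP; rewrite -submx0 -(cap0 Z) capmxS ?capmxSl.
  rewrite sub_capmx -[-1 in X in (_ <= X)%MS](mul1r (-1)) -[1 in X in (_ && X)%MS](mul1r 1).
  by rewrite !sub_eigenspace_mulmx ?capmxSl ?capmxSr.
have rank_X1 : (2 * \rank (eigenspace X 1) <= \rank (eigenspace X 1 + eigenspace X (-1)))%N.
  apply: (mxrank_disjoint_image V_unit) => //.
  by rewrite -[-1](mul1r (-1)) sub_eigenspace_mulmx.
have E11_E21 : (E11 + E21 <= eigenspace X 1)%MS by rewrite addsmx_sub !capmxSr.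
have := mxrankS E11_E21; have := rank_leq_col (eigenspace X 1 + eigenspace X (-1))%MS.
lia.
Qed.

End JointEigenspace.

Section CommutingInvolutions.
Variables Z X : 'M[F]_n.
Hypotheses (two_neq0 : (2 : F) != 0)
  (ZZ : Z *m Z = 1%:M) (XX : X *m X = 1%:M) (ZX : Z *m X = X *m Z).

Lemma eigen_add_involutions m (W : 'M[F]_(m, n)) c :
  W *m (Z + X) = c *: W ->
  [/\ W *m Z + W *m X = c *: W,
      W + (W *m Z) *m X = c *: (W *m Z) &
      (W *m Z) *m X + W = c *: (W *m X)].
Proof.
rewrite mulmxDr => WZX; split => //.
  have := congr1 (mulmx^~ Z) WZX; rewrite mulmxDl -scalemxAl.
  by rewrite -!mulmxA ZZ mulmx1 -ZX.
have := congr1 (mulmx^~ X) WZX; rewrite mulmxDl -scalemxAl.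
by rewrite -!mulmxA XX mulmx1 => <-.
Qed.

Lemma sub_eigenspace_add_involutions m (W : 'M[F]_(m, n)) :
  (W <= eigenspace (Z + X) 2)%MS = (W <= eigenspace Z 1 :&: eigenspace X 1)%MS.
Proof.
rewrite sub_capmx; apply/eigenspaceP/andP => [WZX | [/eigenspaceP WZ /eigenspaceP WX]].
  have [sum_eq ZX_Z ZX_X] := eigen_add_involutions WZX.
  have WZ_WX : W *m Z = W *m X by apply: (scalerI two_neq0); rewrite -ZX_Z -ZX_X addrC.
  have WZ_W : W *m Z = W.
    apply: (scalerI two_neq0); rewrite -sum_eq -WZ_WX.
    by rewrite -[in RHS](scale1r (W *m Z)) -scalerDl.
  by split; apply/eigenspaceP; rewrite scale1r // -WZ_WX.
by rewrite mulmxDr WZ WX !scale1r scaler_nat mulr2n.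
Qed.

Lemma eigenvalue_add_involutions c : eigenvalue (Z + X) c -> [\/ c = 0, c = 2 | c = -2].
Proof.
case/eigenvalueP => v vZX v_neq0.
have [c0 | c_neq0] := eqVneq c 0; first by constructor 1.
have [sum_eq ZX_Z ZX_X] := eigen_add_involutions vZX.
have vZ_vX : v *m Z = v *m X by apply: (scalerI c_neq0); rewrite -ZX_Z -ZX_X addrC.
have vZX_v : v *m Z *m X = v by rewrite vZ_vX -mulmxA XX mulmx1.
rewrite vZX_v -vZ_vX in sum_eq ZX_Z.
have two_v : 2 *: v = c *: (v *m Z) by rewrite scaler_nat mulr2n.
have two_vZ : 2 *: (v *m Z) = c *: v by rewrite scaler_nat mulr2n.
have : (2 * 2) *: v = (c * c) *: v.
  by rewrite -scalerA two_v scalerA mulrC -scalerA -scalerA two_vZ.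
move/eqP; rewrite -subr_eq0 -scalerBl scaler_eq0 (negbTE v_neq0) orbF subr_eq0.
by rewrite -!expr2 eq_sym eqf_sqr => /orP [/eqP-> | /eqP->]; [constructor 2 | constructor 3].
Qed.

End CommutingInvolutions.
End Eigenspaces.

Lemma adjD m n (A B : 'M[algC]_(m, n)) : adj (A + B) = adj A + adj B.
Proof. by apply/matrixP => i j; rewrite !mxE rmorphD. Qed.

Lemma adjZ m n c (A : 'M[algC]_(m, n)) : adj (c *: A) = c^* *: adj A.
Proof. by apply/matrixP => i j; rewrite !mxE rmorphM. Qed.

Lemma mxrank_orthonormal (T : finType) (P : pred T) n (v : T -> 'cV[algC]_n) :
  {in P &, forall x y, (adj (v x) *m v y) 0 0 = (x == y)%:R} ->
  \rank (\sum_(x | P x) <<(v x)^T>>)%MS = #|P|.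
Proof.
move=> orthonormal; apply/eqP; rewrite eqn_leq; apply/andP; split.
  rewrite -sum1_card; apply: (big_ind2 (fun (A : 'M_n) k => \rank A <= k)%N).
  - by rewrite mxrank0.
  - move=> A1 k1 A2 k2 le_1 le_2; apply: leq_trans (leq_add le_1 le_2).
    exact: (mxrank_adds_leqif _ _).1.
  - by move=> x _; rewrite genmxE rank_leq_row.
pose B := \matrix_(i < #|P|) (v (enum_val i))^T.
have B_unitary : B \is unitarymx.
  apply/unitarymxP/matrixP => i j.
  have := orthonormal _ _ (enum_valP j) (enum_valP i).
  rewrite (inj_eq enum_val_inj) eq_sym [1%:M i j]mxE => <-; rewrite !mxE.
  by apply: eq_bigr => l _; rewrite !mxE mulrC.
rewrite -{1}(mxrank_unitary B_unitary) mxrankS //.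
apply/row_subP => i; rewrite rowK (sumsmx_sup (enum_val i)) ?genmxE //; exact: enum_valP.
Qed.

(** * Tensor products of one-qubit operators *)

Lemma qbitE N (i : 'I_(2 ^ N)) k : val (qbit i k) = odd (i %/ 2 ^ k).
Proof. by rewrite /qbit; apply: inordK; case: odd. Qed.

Definition bits N (i : 'I_(2 ^ N)) : {ffun 'I_N -> 'I_2} := [ffun k => qbit i k].

Lemma bits_inj N : injective (@bits N).
Proof.
move=> i j /ffunP eq_ij; apply/val_inj/(binary_digits_inj (ltn_ord i) (ltn_ord j)).
move=> k lt_k; have := congr1 val (eq_ij (Ordinal lt_k)).
by rewrite !ffunE !qbitE => /(congr1 odd); rewrite !oddb.
Qed.

Lemma bits_bij N : bijective (@bits N).
Proof. by apply: inj_card_bij; [apply: bits_inj | rewrite card_ffun !card_ord]. Qed.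

Lemma eq_tens N (f g : 'I_N -> 'M[algC]_2) : f =1 g -> tens f = tens g.
Proof.
by move=> eq_fg; apply/matrixP => i j; rewrite !mxE; apply: eq_bigr => k _; rewrite eq_fg.
Qed.

Lemma tens_mul N (f g : 'I_N -> 'M[algC]_2) :
  tens f *m tens g = tens (fun k => f k *m g k).
Proof.
apply/matrixP => i j; rewrite !mxE.
pose F (t : {ffun 'I_N -> 'I_2}) := \prod_k (f k (qbit i k) (t k) * g k (t k) (qbit j k)).
transitivity (\sum_(l : 'I_(2 ^ N)) F (bits l)).
  by apply: eq_bigr => l _; rewrite !mxE -big_split; apply: eq_bigr => k _; rewrite ffunE.
(* Summing over basis indices is summing over all bit strings, which distributes. *)
rewrite -(reindex (@bits N) (P := predT) (F := F)); last exact: onW_bij (@bits_bij N).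
rewrite /F -(bigA_distr_bigA (fun k b => f k (qbit i k) b * g k b (qbit j k))).
by apply: eq_bigr => k _; rewrite mxE.
Qed.

Lemma tens1 N : tens (fun _ : 'I_N => 1%:M) = 1%:M.
Proof.
apply/matrixP => i j; rewrite !mxE.
under eq_bigr do rewrite mxE; rewrite prod_bool_natr.
congr (nat_of_bool _)%:R; apply/forallP/eqP => [eq_bits | -> //].
by apply/bits_inj/ffunP => k; rewrite !ffunE; apply/eqP.
Qed.

Lemma tens_scale N (c : 'I_N -> algC) f :
  tens (fun k => c k *: f k) = (\prod_k c k) *: tens f.
Proof. by apply/matrixP => i j; rewrite !mxE -big_split; apply: eq_bigr => k _; rewrite mxE. Qed.

Lemma tens_comm N (f g : 'I_N -> 'M[algC]_2) (c : 'I_N -> algC) :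
  (forall k, f k *m g k = c k *: (g k *m f k)) ->
  tens f *m tens g = (\prod_k c k) *: (tens g *m tens f).
Proof. by move=> fg_comm; rewrite !tens_mul -tens_scale; apply: eq_tens. Qed.

Lemma tens_tr N (f : 'I_N -> 'M[algC]_2) : (tens f)^T = tens (fun k => (f k)^T).
Proof. by apply/matrixP => i j; rewrite !mxE; apply: eq_bigr => k _; rewrite mxE. Qed.

Lemma tens_adj N (f : 'I_N -> 'M[algC]_2) : adj (tens f) = tens (fun k => adj (f k)).
Proof. by apply/matrixP => i j; rewrite !mxE rmorph_prod; apply: eq_bigr => k _; rewrite !mxE. Qed.

Definition bit (b : bool) : 'I_2 := @Ordinal 2 b (leq_b1 b).

Definition ketbra0 (b : bool) : 'M[algC]_2 := delta_mx (bit b) 0.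

Ltac mx2 := let i := fresh "i" in let j := fresh "j" in
  apply/matrixP => i j; rewrite !mxE ?big_ord_recl ?big_ord0 ?mxE;
  case: i => [[|[|//]] ?]; case: j => [[|[|//]] ?]; rewrite /= ?mxE /=;
  rewrite ?(mul0r,mulr0,mul1r,mulr1,add0r,addr0,mulrN1,mulN1r,opprK,oppr0) //.

Lemma sigma_x_sqr : sigma_x *m sigma_x = 1%:M.
Proof. mx2. Qed.
Lemma sigma_z_sqr : sigma_z *m sigma_z = 1%:M.
Proof. mx2. Qed.
Lemma sigma_zx_anticomm : sigma_z *m sigma_x = - (sigma_x *m sigma_z).
Proof. mx2. Qed.
Lemma tr_sigma_x : sigma_x^T = sigma_x.
Proof. mx2. Qed.
Lemma tr_sigma_z : sigma_z^T = sigma_z.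
Proof. mx2. Qed.
Lemma sigma_x_ketbra0 b : sigma_x *m ketbra0 b = ketbra0 (~~ b).
Proof. by case: b; mx2. Qed.
Lemma sigma_z_ketbra0 b : sigma_z *m ketbra0 b = (if b then -1 else 1) *: ketbra0 b.
Proof. by case: b; mx2. Qed.
Lemma dot_ketbra0 a b : (adj (ketbra0 a) *m ketbra0 b) 0 0 = (a == b)%:R.
Proof.
by case: a; case: b; rewrite !mxE !big_ord_recl big_ord0 !mxE /=
  ?conjC0 ?conjC1 ?(mul0r,mulr0,mul1r,mulr1,add0r,addr0).
Qed.

Definition index0 N : 'I_(2 ^ N) := Ordinal (expn_gt0 2 N).

(* |s> is obtained from |0...0> by applying ketbra0 (s k) = |s_k><0| on each qubit k. *)
Definition ket N (s : 'I_N -> bool) : 'cV[algC]_(2 ^ N) :=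
  tens (fun k => ketbra0 (s k)) *m delta_mx (index0 N) 0.

Lemma qbit_index0 N k : qbit (index0 N) k = 0.
Proof. by apply/val_inj; rewrite qbitE /= div0n. Qed.

Lemma ketE N (s : 'I_N -> bool) i : ket s i 0 = (bits i == [ffun k => bit (s k)])%:R.
Proof.
rewrite /ket -colE !mxE.
under eq_bigr do rewrite mxE qbit_index0 eqxx andbT.
rewrite prod_bool_natr; congr (nat_of_bool _)%:R.
apply/forallP/eqP => [eq_bit | /ffunP eq_bit k].
  by apply/ffunP => k; rewrite !ffunE; apply/eqP.
by have := eq_bit k; rewrite !ffunE => ->.
Qed.

Lemma dot_ket N (s t : 'I_N -> bool) :
  (adj (ket s) *m ket t) 0 0 = [forall k, s k == t k]%:R.
Proof.
have adj_col m n j (A : 'M[algC]_(m, n)) : adj (col j A) = row j (adj A).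
  by apply/matrixP => i k; rewrite !mxE.
rewrite /ket -!colE adj_col colE mulmxA -colE -row_mul tens_adj tens_mul !mxE.
under eq_bigr do rewrite qbit_index0 dot_ketbra0.
exact: prod_bool_natr.
Qed.

Lemma index_max_subproof N : ((2 ^ N).-1 < 2 ^ N)%N.
Proof. by rewrite ltn_predL expn_gt0. Qed.
Definition index_max N : 'I_(2 ^ N) := Ordinal (index_max_subproof N).

Lemma qbit_index_max N (k : 'I_N) : qbit (index_max N) k = bit true.
Proof.
apply/val_inj; rewrite qbitE /=.
have lt_k := ltn_ord k.
have split_max : ((2 ^ N).-1 = 2 ^ k * (2 ^ (N - k)).-1 + (2 ^ k).-1)%N.
  rewrite -{1}(subnKC (ltnW lt_k)) expnD.
  have := expn_gt0 2 k; have := expn_gt0 2 (N - k).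
  move: (2 ^ k)%N (2 ^ (N - k))%N => a b a_gt0 b_gt0; nia.
rewrite split_max mulnC divnMDl ?expn_gt0 // divn_small ?addn0 ?prednK ?ltnSn ?expn_gt0 //.
by rewrite -subn1 oddB ?expn_gt0 // oddX /= subn_eq0 leqNgt lt_k.
Qed.

Lemma bits_const N (i : 'I_(2 ^ N)) b :
  (bits i == [ffun => bit b]) = (i == if b then index_max N else index0 N).
Proof.
suff -> : [ffun => bit b] = bits (if b then index_max N else index0 N).
  exact: (inj_eq (@bits_inj N)).
apply/ffunP => k; rewrite !ffunE.
by case: b; rewrite ?qbit_index_max ?qbit_index0 //; apply/val_inj.
Qed.

Lemma ghzE n : ghz n.+1 = (sqrtC 2)^-1 *: (ket (fun _ => false) + ket (fun _ => true)).
Proof.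
apply/matrixP => i j; rewrite (ord1 j) mxE [in RHS]mxE [in RHS]mxE !ketE !bits_const /=.
have max_gt0 : (0 < (2 ^ n.+1).-1)%N by rewrite ltn_predRL (ltn_exp2l 0).
rewrite -!(inj_eq val_inj) /=.
case: (eqVneq (i : nat) 0%N) => [-> | _] /=.
  by rewrite eq_sym eqn0Ngt max_gt0 addr0 mulr1.
by case: eqVneq => _; rewrite ?add0r ?addr0 ?mulr1 ?mulr0.
Qed.

Lemma psiKE n (K : {set 'I_n.+1}) :
  psiK K = (sqrtC 2)^-1 *: (ket (fun k => k \in K) + ket (fun k => k \notin K)).
Proof.
rewrite /psiK ghzE -scalemxAr mulmxDr /ket !mulmxA !tens_mul.
by congr (_ *: (_ + _)); congr (_ *m _); apply: eq_tens => k;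
  case: (k \in K); rewrite ?sigma_x_ketbra0 ?mul1mx.
Qed.

Lemma ghz_psiK0 N : ghz N = psiK (set0 : {set 'I_N}).
Proof.
rewrite /psiK (@eq_tens _ _ (fun _ => 1%:M)) ?tens1 ?mul1mx // => k.
by rewrite in_set0.
Qed.

(** * The CHSH operator *)

Definition sigma_zN N := tens (fun _ : 'I_N => sigma_z).
Definition sigma_xN N := tens (fun _ : 'I_N => sigma_x).

Lemma sigma_zN_ket N (s : 'I_N -> bool) :
  sigma_zN N *m ket s = (-1) ^+ #|[pred k | s k]| *: ket s.
Proof.
rewrite /ket mulmxA tens_mul (eq_tens (fun k => sigma_z_ketbra0 (s k))) tens_scale.
by rewrite -scalemxAl -big_mkcond /= -prodr_const.
Qed.

Lemma sigma_xN_ket N (s : 'I_N -> bool) : sigma_xN N *m ket s = ket (fun k => ~~ s k).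
Proof. by rewrite /ket mulmxA tens_mul (eq_tens (fun k => sigma_x_ketbra0 (s k))). Qed.

Lemma I_CHSHE n : I_CHSH n.+1 = sqrtC 2 *: (sigma_zN n.+1 + sigma_xN n.+1).
Proof.
have sqrt2E : sqrtC 2 = 2 * (sqrtC 2)^-1 :> algC.
  by rewrite -{2}(sqrtCK 2) expr2 -mulrA divff ?mulr1 // sqrtC_eq0 pnatr_eq0.
apply/matrixP => i j.
rewrite /I_CHSH summxE big_bool /= !summxE !big_bool /=.
rewrite /AB /sigma_zN /sigma_xN /tens !mxE !big_ord_recr /= !ltnn.
have first_qubits (A B : 'M[algC]_2) :
  \prod_(k < n) (if (widen_ord (leqnSn n) k < n)%N then A else B)
     (qbit i (widen_ord (leqnSn n) k)) (qbit j (widen_ord (leqnSn n) k)) =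
  \prod_(k < n) A (qbit i (widen_ord (leqnSn n) k)) (qbit j (widen_ord (leqnSn n) k)).
  by apply: eq_bigr => k _; rewrite /= ltn_ord.
rewrite !first_qubits /X_j /X_j' /X_N /X_N' [in RHS]sqrt2E !mxE.
move: sigma_z sigma_x (sqrtC 2)^-1 => Z X c; rewrite expr1 expr0; ring.
Qed.

Lemma sigma_zN_sqr N : sigma_zN N *m sigma_zN N = 1%:M.
Proof. by rewrite tens_mul -tens1; apply: eq_tens => k; rewrite sigma_z_sqr. Qed.
Lemma sigma_xN_sqr N : sigma_xN N *m sigma_xN N = 1%:M.
Proof. by rewrite tens_mul -tens1; apply: eq_tens => k; rewrite sigma_x_sqr. Qed.

Lemma sigma_zN_xN_comm N : ~~ odd N -> sigma_zN N *m sigma_xN N = sigma_xN N *m sigma_zN N.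
Proof.
move=> even_N; rewrite (@tens_comm _ _ _ (fun _ => -1)) => [|k]; last first.
  by rewrite sigma_zx_anticomm scaleN1r.
by rewrite prodr_const card_ord -signr_odd (negbTE even_N) scale1r.
Qed.

Lemma I_CHSH_tr n : (I_CHSH n.+1)^T = I_CHSH n.+1.
Proof.
rewrite I_CHSHE linearZ linearD /= !tens_tr.
by congr (_ *: (_ + _)); apply: eq_tens => k; rewrite ?tr_sigma_z ?tr_sigma_x.
Qed.

Lemma sigma_zN_psiK n (K : {set 'I_n.+1}) : ~~ odd n.+1 -> ~~ odd #|K| ->
  sigma_zN n.+1 *m psiK K = psiK K.
Proof.
move=> even_N even_K; rewrite psiKE -scalemxAr mulmxDr !sigma_zN_ket.
have even_CK : ~~ odd #|~: K|.
  by have := congr1 odd (cardsC K); rewrite card_ord oddD (negbTE even_K) addFb => ->.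
have -> : #|[pred k | k \in K]| = #|K| by apply: eq_card => k.
have -> : #|[pred k : 'I_n.+1 | k \notin K]| = #|~: K| by apply: eq_card => k; rewrite !inE.
by rewrite -(signr_odd _ #|K|) -(signr_odd _ #|~: K|) (negbTE even_K) (negbTE even_CK) !scale1r.
Qed.

Lemma sigma_xN_psiK n (K : {set 'I_n.+1}) : sigma_xN n.+1 *m psiK K = psiK K.
Proof.
rewrite psiKE -scalemxAr mulmxDr !sigma_xN_ket addrC; congr (_ *: (_ + _)).
by rewrite /ket; congr (_ *m _); apply: eq_tens => k; rewrite negbK.
Qed.

Lemma I_CHSH_psiK n (K : {set 'I_n.+1}) : ~~ odd n.+1 -> ~~ odd #|K| ->
  I_CHSH n.+1 *m psiK K = (2 * sqrtC 2) *: psiK K.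
Proof.
move=> even_N even_K; rewrite I_CHSHE -scalemxAl mulmxDl sigma_zN_psiK // sigma_xN_psiK.
by rewrite -mulr2n -scaler_nat scalerA mulrC.
Qed.

Lemma dot_psiK n (K K' : {set 'I_n.+1}) : ord_max \notin K -> ord_max \notin K' ->
  (adj (psiK K) *m psiK K') 0 0 = (K == K')%:R.
Proof.
move=> notin_K notin_K'; rewrite !psiKE adjZ adjD -scalemxAl -scalemxAr.
have entryD (A B : 'M[algC]_1) : (A + B) 0 0 = A 0 0 + B 0 0 by rewrite mxE.
have entryZ c (A : 'M[algC]_1) : (c *: A) 0 0 = c * A 0 0 by rewrite mxE.
rewrite mulmxDl !mulmxDr !entryZ !entryD !dot_ket.
have cross1 : [forall k, (k \in K) == (k \notin K')] = false.
  by apply/forallP => /(_ ord_max); rewrite (negbTE notin_K) notin_K'.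
have cross2 : [forall k, (k \notin K) == (k \in K')] = false.
  by apply/forallP => /(_ ord_max); rewrite notin_K (negbTE notin_K').
have -> : [forall k, (k \notin K) == (k \notin K')] = (K == K').
  apply/forallP/eqP => [eqK | -> k //]; apply/setP => k.
  by have := eqK k; rewrite (inj_eq negb_inj) => /eqP.
have -> : [forall k, (k \in K) == (k \in K')] = (K == K').
  by apply/forallP/eqP => [eqK | -> k //]; apply/setP => k; apply/eqP.
have c_real : ((sqrtC 2)^-1)^* = (sqrtC 2)^-1 :> algC.
  by apply: geC0_conj; rewrite invr_ge0 sqrtC_ge0 ler0n.
have c_sqr : (sqrtC 2)^-1 * (sqrtC 2)^-1 * 2 = 1 :> algC.
  by rewrite -invfM -expr2 sqrtCK mulVf // pnatr_eq0.
rewrite cross1 cross2 c_real /= mulr0n addr0 add0r.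
transitivity ((sqrtC 2)^-1 * (sqrtC 2)^-1 * 2 * (K == K')%:R :> algC); first by ring.
by rewrite c_sqr mul1r.
Qed.

Definition at_qubit N (k0 : 'I_N) (A : 'M[algC]_2) :=
  tens (fun k => if k == k0 then A else 1%:M).

Lemma at_qubit_unit N (k0 : 'I_N) A : A *m A = 1%:M -> at_qubit k0 A \in unitmx.
Proof.
move=> AA; suff /mulmx1_unit[] : at_qubit k0 A *m at_qubit k0 A = 1%:M by [].
by rewrite tens_mul -tens1; apply: eq_tens => k; case: (k == k0); rewrite ?mul1mx.
Qed.

Lemma at_qubit_comm N (k0 : 'I_N) (A B : 'M[algC]_2) c : A *m B = c *: (B *m A) ->
  at_qubit k0 A *m tens (fun _ => B) = c *: (tens (fun _ => B) *m at_qubit k0 A).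
Proof.
move=> AB; rewrite (@tens_comm _ _ _ (fun k => if k == k0 then c else 1)) => [|k].
  by rewrite (bigD1 k0) //= eqxx big1 ?mulr1 // => k /negbTE ->.
by case: (k == k0); rewrite ?mul1mx ?mulmx1 ?scale1r.
Qed.

Lemma eigenspace_I_CHSH n : ~~ odd n.+1 ->
  (eigenspace (I_CHSH n.+1)^T (2 * sqrtC 2)
     :=: eigenspace (sigma_zN n.+1) 1 :&: eigenspace (sigma_xN n.+1) 1)%MS.
Proof.
move=> even_N.
have two_neq0 : (2 : algC) != 0 by rewrite pnatr_eq0.
have sqrt2_neq0 : sqrtC 2 != 0 :> algC by rewrite sqrtC_eq0.
rewrite I_CHSH_tr I_CHSHE mulrC; apply: eqmx_trans (eigenspaceZ _ _ sqrt2_neq0) _.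
have sub_eq := sub_eigenspace_add_involutions two_neq0 (sigma_zN_sqr _) (sigma_xN_sqr _)
  (sigma_zN_xN_comm even_N).
by apply/eqmxP/andP; rewrite -sub_eq submx_refl sub_eq submx_refl.
Qed.

Lemma eigenvalue_I_CHSH_le n mu : ~~ odd n.+1 ->
  eigenvalue (I_CHSH n.+1) mu -> mu <= 2 * sqrtC 2.
Proof.
move=> even_N; have sqrt2_gt0 : 0 < sqrtC 2 :> algC by rewrite sqrtC_gt0 ltr0n.
have lam_ge0 : 0 <= 2 * sqrtC 2 :> algC by rewrite mulr_ge0 ?ler0n ?ltW.
rewrite I_CHSHE -{1 2}(divfK (lt0r_neq0 sqrt2_gt0) mu) mulrC eigenvalueZ ?lt0r_neq0 //.
case/(eigenvalue_add_involutions (sigma_zN_sqr _) (sigma_xN_sqr _) (sigma_zN_xN_comm even_N))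
  => ->; rewrite (mulrC (sqrtC 2)) //; first by rewrite mul0r.
by rewrite mulNr -subr_ge0 opprK addr_ge0.
Qed.

Lemma mxrank_eigenspace_I_CHSH n : ~~ odd n.+1 ->
  (4 * \rank (eigenspace (I_CHSH n.+1)^T (2 * sqrtC 2)) <= 2 ^ n.+1)%N.
Proof.
move=> even_N; rewrite (eigenspace_I_CHSH even_N).
have two_neq0 : (2 : algC) != 0 by rewrite pnatr_eq0.
apply: (mxrank_joint_eigenspace two_neq0 (U := at_qubit ord0 sigma_x) (V := at_qubit ord0 sigma_z)).
- by apply: at_qubit_unit; rewrite sigma_x_sqr.
- by apply: at_qubit_unit; rewrite sigma_z_sqr.
- by apply: at_qubit_comm; rewrite sigma_zx_anticomm scaleN1r opprK.
- by apply: at_qubit_comm; rewrite scale1r.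
- by apply: at_qubit_comm; rewrite sigma_zx_anticomm scaleN1r.
Qed.

Lemma evenK_notin_max n (K : {set 'I_n.+1}) : evenK K -> ord_max \notin K.
Proof. by case/andP => /subsetP sub_K _; apply/negP => /sub_K; rewrite inE ltnn. Qed.

Lemma card_evenK n : (0 < n)%N -> #|[set K : {set 'I_n.+1} | evenK K]| = (2 ^ n.-1)%N.
Proof.
move=> n_gt0; set A := [set k : 'I_n.+1 | (k < n)%N].
have card_A : #|A| = n.
  have -> : A = [set~ ord_max].
    by apply/setP => k; rewrite !inE -(inj_eq val_inj) /= ltn_neqAle -ltnS ltn_ord andbT.
  by rewrite cardsC1 card_ord.
rewrite -[in RHS]card_A -card_even_subsets; last by rewrite -card_gt0 card_A.
by apply: eq_card => K; rewrite !inE.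
Qed.

Lemma dot_psiK_evenK n (K K' : {set 'I_n.+1}) : evenK K -> evenK K' ->
  (adj (psiK K) *m psiK K') 0 0 = (K == K')%:R.
Proof. by move=> even_K even_K'; apply: dot_psiK; apply: evenK_notin_max. Qed.

Lemma span_psiK_sub_eigenspace n : ~~ odd n.+1 ->
  (\sum_(K : {set 'I_n.+1} | evenK K) <<(psiK K)^T>>
     <= eigenspace (I_CHSH n.+1)^T (2 * sqrtC 2))%MS.
Proof.
move=> even_N; apply/sumsmx_subP => K /andP [_ even_K]; rewrite genmxE; apply/eigenspaceP.
by rewrite -trmx_mul I_CHSH_psiK // linearZ.
Qed.

Lemma mxrank_span_psiK n : (0 < n)%N ->
  \rank (\sum_(K : {set 'I_n.+1} | evenK K) <<(psiK K)^T>>)%MS = (2 ^ n.-1)%N.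
Proof.
move=> n_gt0; rewrite mxrank_orthonormal => [|K K']; last exact: dot_psiK_evenK.
by rewrite -cardsE card_evenK.
Qed.

Theorem mainTheorem4 (N : nat) (hN4 : (4 <= N)%N) (hNeven : ~~ odd N) :
  let I := I_CHSH N in
  let lam : algC := 2 * sqrtC 2 in
  [/\ (adj (ghz N) *m I *m ghz N) 0 0 = lam,
      eigenvalue I lam /\ (forall mu : algC, eigenvalue I mu -> mu <= lam),
      \rank (eigenspace I^T lam) = (2 ^ (N - 2))%N,
      (forall K K' : {set 'I_N}, evenK K -> evenK K' ->
         (adj (psiK K) *m psiK K') 0 0 = (K == K')%:R) &
      (eigenspace I^T lam == (\sum_(K : {set 'I_N} | evenK K) <<(psiK K)^T>>)%MS)%MS].
Proof.
case: N hN4 hNeven => // n hN4 even_N I lam.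
set E := eigenspace I^T lam.
set S := (\sum_(K | evenK K) <<(psiK K)^T>>)%MS.
have S_E : (S <= E)%MS := span_psiK_sub_eigenspace even_N.
have rank_S : \rank S = (2 ^ (n.+1 - 2))%N by rewrite mxrank_span_psiK ?subn2 //; lia.
have rank_E : \rank E = \rank S.
  have := mxrank_eigenspace_I_CHSH even_N; rewrite -/I -/lam -/E.
  have := mxrankS S_E; rewrite rank_S.
  have : (2 ^ n.+1 = 4 * 2 ^ (n.+1 - 2))%N by rewrite -[4%N]/(2 ^ 2)%N -expnD subnKC //; lia.
  lia.
split.
- rewrite ghz_psiK0 -mulmxA I_CHSH_psiK ?cards0 // -scalemxAr mxE.
  by rewrite dot_psiK ?inE // eqxx mulr1.
- split; last by move=> mu; apply: eigenvalue_I_CHSH_le.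
  have I_tr : I^T = I := I_CHSH_tr n.
  by rewrite /eigenvalue -mxrank_eq0 -I_tr -/E rank_E rank_S expn_eq0.
- by rewrite rank_E.
- exact: dot_psiK_evenK.
- by apply/andP; split => //; rewrite -(mxrank_leqif_sup S_E).2 rank_E.
Qed.
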